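(* Let $k>1$ be a fixed integer. Suppose that a semigroup $S$ (i) satisfies the identities $x\,y_1^ky_2^k\cdots y_n^k\,x\approx x\,y_n^ky_{n-1}^k\cdots y_1^k\,x$ for all $n>1$; (ii) does not satisfy the identity $x^ky^kx^k\approx x^k(y^kx^k)^{k+1}$; (iii) satisfies the identities $x^{k+2}\approx x^2$, $x^{k+1}yx\approx xyx$ and $xyx^{k+1}\approx xyx$. Then $S$ is non-finitely based.
   Context: All letters denote distinct variables; words are elements of the free semigroup over a countably infinite alphabet. $S$ satisfies $\mathbf u\approx\mathbf v$ if $\varphi(\mathbf u)=\varphi(\mathbf v)$ for every homomorphism $\varphi$ from the free semigroup to $S$. $S$ is finitely based if all its identities are derivable from a finite subset of them; otherwise non-finitely based. *)

From mathcomp Require Import all_boot.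
Set Implicit Arguments. Unset Strict Implicit. Unset Printing Implicit Defensive.

(* A word of the free semigroup over the alphabet nat: a NONEMPTY seq nat.
   We use seq nat and require nonemptiness wherever words are quantified. *)
Definition word := seq nat.
Definition identity := (word * word)%type.

Section Semigroup.
Variables (T : Type) (mul : T -> T -> T).

(* value of a word under an assignment phi of letters (homomorphism from the
   free semigroup); on the empty seq it is meaningless and never used. *)
Definition eval_word (phi : nat -> T) (w : word) (d : T) : T :=
  match w with
  | [::] => d
  | x :: s => foldl (fun a y => mul a (phi y)) (phi x) s
  end.

Definition satisfies (u v : word) : Prop :=
  forall phi : nat -> T, forall d : T, eval_word phi u d = eval_word phi v d.
End Semigroup.

Definition subst_word (theta : nat -> word) (w : word) : word :=
  flatten (map theta w).

(* Equational derivability (Birkhoff's deduction system for semigroups):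
   the equivalence closure of p theta(u) q ~ p theta(v) q for (u,v) in Sigma,
   theta a substitution into nonempty words, p q arbitrary (possibly empty). *)
Inductive derivable (Sigma : seq identity) : word -> word -> Prop :=
| der_refl w : derivable Sigma w w
| der_sym u v : derivable Sigma u v -> derivable Sigma v u
| der_trans u v w : derivable Sigma u v -> derivable Sigma v w ->
                    derivable Sigma u w
| der_step (u v : word) (theta : nat -> word) (p q : word) :
    (u, v) \in Sigma -> (forall x, theta x != [::]) ->
    derivable Sigma (p ++ subst_word theta u ++ q) (p ++ subst_word theta v ++ q).

Definition finitely_based (T : Type) (mul : T -> T -> T) : Prop :=
  exists Sigma : seq identity,
    (forall e, e \in Sigma -> [/\ e.1 != [::], e.2 != [::] & satisfies mul e.1 e.2])
    /\ forall u v : word, u != [::] -> v != [::] -> satisfies mul u v ->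
         derivable Sigma u v.

Definition non_finitely_based (T : Type) (mul : T -> T -> T) : Prop :=
  ~ finitely_based mul.

Definition pw (k y : nat) : word := nseq k y.

(* Take a counterexample to (ii): with E = x^k and F = y^k evaluated there,
   E and F are idempotents (by x^(k+2) = x^2) with E(FE) <> E(FE)^(k+1), and the
   elements E(FE)^j only depend on whether j is 0, 1 or at least 2.  Reading a word
   over {E, F} according to a predicate on letters, every identity of S therefore
   preserves whether the letters satisfying the predicate form no block, exactly one
   block, or several blocks.  Consequently every word equal in S to
   x y_1^k ... y_n^k x has the form x^a c_1^(m_1) ... c_n^(m_n) x^b, and applying an
   identity in fewer than n letters cannot change c_1: either the rewritten factor
   misses a letter after the first one, or by pigeonhole some variable carries two
   letters, occurs once, and can be collapsed to a marker block.  For n beyond the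
   size of a finite basis, the identity (i) moving y_n to the front is not derivable. *)

From mathcomp Require Import all_boot zify.
From Stdlib Require Import Classical.
Set Implicit Arguments. Unset Strict Implicit. Unset Printing Implicit Defensive.

Lemma map_neq0 (T U : eqType) (f : T -> U) (s : seq T) : s != [::] -> map f s != [::].
Proof. by case: s. Qed.

Lemma flatten_map_neq0 (T U : eqType) (psi : U -> seq T) u :
  (forall t, psi t != [::]) -> u != [::] -> flatten (map psi u) != [::].
Proof. by move=> npsi; case: u => // t u _ /=; case: (psi t) (npsi t). Qed.

Section Evaluation.
Variables (T : Type) (mul : T -> T -> T).
Hypothesis mulA : associative mul.

Definition eval_seq {A : eqType} (f : A -> T) (d : T) (w : seq A) : T :=
  if w is x :: s then foldl (fun a y => mul a (f y)) (f x) s else d.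

Lemma eval_wordE phi w d : eval_word mul phi w d = eval_seq phi d w.
Proof. by case: w. Qed.

Lemma foldl_mul_assoc {A : eqType} (f : A -> T) b c s :
  foldl (fun a y => mul a (f y)) (mul b c) s =
  mul b (foldl (fun a y => mul a (f y)) c s).
Proof. by elim: s b c => [//|y s IH] b c /=; rewrite -mulA IH. Qed.

Lemma eval_seq_cat {A : eqType} (f : A -> T) d w1 w2 : w1 != [::] -> w2 != [::] ->
  eval_seq f d (w1 ++ w2) = mul (eval_seq f d w1) (eval_seq f d w2).
Proof.
by case: w1 => [//|x s] _; case: w2 => [//|y t] _ /=; rewrite foldl_cat /= foldl_mul_assoc.
Qed.

Lemma eval_seq_congr {A : eqType} (f : A -> T) d L X X' R : X != [::] -> X' != [::] ->
  eval_seq f d X = eval_seq f d X' ->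
  eval_seq f d (L ++ X ++ R) = eval_seq f d (L ++ X' ++ R).
Proof.
move=> nX nX' eX.
have eXR : eval_seq f d (X ++ R) = eval_seq f d (X' ++ R).
  by case: R => [|z R]; rewrite ?cats0 // !eval_seq_cat // eX.
case: L => [//|z L]; rewrite !(eval_seq_cat _ _ (w1 := z :: L)) ?eXR //.
  by case: (X') nX'.
by case: (X) nX.
Qed.

Lemma eval_seq_flatten {A B : eqType} (f : A -> T) d d' (psi : B -> seq A) u :
  u != [::] -> (forall t, psi t != [::]) ->
  eval_seq f d (flatten (map psi u)) = eval_seq (fun t => eval_seq f d (psi t)) d' u.
Proof.
move=> + npsi; elim: u => [//|t u IH] _.
case: u IH => [|t' u] IH /=; first by rewrite cats0.
rewrite eval_seq_cat ?npsi //; last by case: (psi t') (npsi t').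
by rewrite IH //= foldl_mul_assoc.
Qed.

Lemma eval_subst_congr {A : eqType} (f : A -> T) d (psi : nat -> seq A) L R u v :
  satisfies mul u v -> u != [::] -> v != [::] -> (forall t, psi t != [::]) ->
  eval_seq f d (L ++ flatten (map psi u) ++ R) =
  eval_seq f d (L ++ flatten (map psi v) ++ R).
Proof.
move=> uv nu nv npsi; apply: eval_seq_congr; try exact: flatten_map_neq0.
by rewrite !(eval_seq_flatten _ _ d) // -!eval_wordE uv.
Qed.

Lemma derivable_sound (Sig : seq identity) :
  (forall e, e \in Sig -> [/\ e.1 != [::], e.2 != [::] & satisfies mul e.1 e.2]) ->
  forall a b, derivable Sig a b -> satisfies mul a b.
Proof.
move=> hSig a b; elim=> {a b} [//|u v _ uv|u v w _ uv _ vw|u v th p q /hSig[nu nv uv] nth]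
  phi d; rewrite ?uv ?vw //.
by rewrite !eval_wordE; apply: eval_subst_congr => // x; apply: nth.
Qed.

Definition powS (a : T) (j : nat) : T := iter j (fun y => mul y a) a.

Lemma powS_mul a i j : mul (powS a i) (powS a j) = powS a (i + j).+1.
Proof. by elim: j => [|j IH]; rewrite ?addn0 // /powS /= -/(powS a j) mulA IH addnS. Qed.

Lemma powS_periodic a k : powS a k.+1 = powS a 1 ->
  forall j, 0 < j -> powS a (j + k) = powS a j.
Proof.
move=> per j j0; have -> : j + k = j.-1 + k.+1 by lia.
rewrite /powS iterD -/(powS a k.+1) per /powS -iterD; congr iter; lia.
Qed.

Lemma eval_pw phi d j c : eval_word mul phi (pw j.+1 c) d = powS (phi c) j.
Proof.
rewrite /pw /powS /=; elim: j {1 3}(phi c) => [|j IH] b //=.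
by rewrite IH -iterSr.
Qed.
End Evaluation.

Fixpoint descents (b : bool) (l : seq bool) : nat :=
  if l is x :: l' then (b && ~~ x) + descents x l' else 0.

Definition runs (l : seq bool) : nat := descents false (l ++ [:: false]).

Lemma descents_cat b l1 l2 : descents b (l1 ++ l2) = descents b l1 + descents (last b l1) l2.
Proof. by elim: l1 b => [|x l IH] b //=; rewrite IH addnA. Qed.

Lemma descents_const b l : all (pred1 b) l -> descents b l = 0.
Proof. by elim: l b => [//|x l IH] b /= /andP[/eqP -> /IH ->]; case: b. Qed.

Lemma descents_true_pos l : false \in l -> 0 < descents true l.
Proof. by elim: l => [//|[] l IH] //=; rewrite inE /= => /IH. Qed.

Lemma descents_pos b m r : true \in m -> 0 < descents b (m ++ false :: r).
Proof.
elim: m b => [//|x m IH] b; rewrite inE => /orP[/eqP <-|/IH h] /=.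
  by rewrite andbF add0n descents_true_pos // mem_cat inE eqxx orbT.
exact: leq_trans (h x) (leq_addl _ _).
Qed.

Lemma runs_eq0 l : (runs l == 0) = ~~ has id l.
Proof.
apply/eqP/idP => [r0|/hasPn nl]; last first.
  by rewrite /runs descents_const // all_cat andbT; apply/allP => x /nl /= /negbTE ->.
apply/negP => /hasP[[] lx //= _].
by have := descents_pos false [::] lx; rewrite -/(runs l) r0.
Qed.

Lemma minn_runs_has l l' : minn (runs l) 2 = minn (runs l') 2 -> has id l = has id l'.
Proof. by move=> e; apply: negb_inj; rewrite -!runs_eq0; apply/eqP/eqP; lia. Qed.

Lemma minn_runs1 l l' : minn (runs l) 2 = minn (runs l') 2 -> runs l = 1 <-> runs l' = 1.
Proof. by move=> e; split; lia. Qed.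

Lemma has_id_map (T : Type) (A : pred T) w : has id (map A w) = has A w.
Proof. by elim: w => //= x w ->. Qed.

Lemma runs_block l1 l2 l3 : all (pred1 false) l1 -> all (pred1 true) l2 -> l2 != [::] ->
  all (pred1 false) l3 -> runs (l1 ++ l2 ++ l3) = 1.
Proof.
move=> f1 t2 n2 f3; rewrite /runs -!catA descents_cat descents_const // add0n.
have -> : last false l1 = false.
  by case/lastP: l1 f1 => // s x; rewrite all_rcons last_rcons => /andP[/eqP].
case: l2 t2 n2 => [//|x l2] /= /andP[/eqP -> t2] _; rewrite descents_cat descents_const //.
have -> : last true l2 = true.
  by case/lastP: l2 t2 => // s y; rewrite all_rcons last_rcons => /andP[/eqP].
by case: l3 f3 => [//|y l3] /= /andP[/eqP -> f3]; rewrite descents_const //= all_cat f3.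
Qed.

Definition convex (T : eqType) (A : pred T) (w : seq T) : Prop :=
  forall w1 w2 w3, w = w1 ++ w2 ++ w3 -> has A w1 -> has A w3 -> all A w2.

Lemma runs1_convex l : runs l = 1 -> convex id l.
Proof.
move=> r1 l1 l2 l3 el h1 h3; apply/allP => -[//|x2]; exfalso.
case/splitPr: x2 el => a b el; move: r1; rewrite /runs el.
have -> : (l1 ++ (a ++ false :: b) ++ l3) ++ [:: false] =
  (l1 ++ a ++ [:: false]) ++ (b ++ l3 ++ [:: false]) by rewrite -!catA.
rewrite descents_cat.
have P1 : 0 < descents false (l1 ++ a ++ [:: false]).
  by rewrite catA descents_pos // mem_cat; case/hasP: h1 => -[] // ->.
have P2 : 0 < descents (last false (l1 ++ a ++ [:: false])) (b ++ l3 ++ [:: false]).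
  by rewrite [b ++ _]catA descents_pos // mem_cat; case/hasP: h3 => -[] // ->; rewrite orbT.
lia.
Qed.

Lemma convex_hasN (T : eqType) (A : pred T) w : ~~ has A w -> convex A w.
Proof. by move=> nA w1 w2 w3 ew h1; move: nA; rewrite ew has_cat h1. Qed.

Lemma convex_map (T : eqType) (A : pred T) w : convex id (map A w) -> convex A w.
Proof.
move=> cv w1 w2 w3 ew h1 h3.
by have := cv (map A w1) (map A w2) (map A w3); rewrite all_map !has_map ew !map_cat; apply.
Qed.

Definition upclosed (A : pred nat) (P : seq nat) : Prop :=
  forall l1 x l2 y l3, P = l1 ++ x :: l2 ++ y :: l3 -> A x -> A y.

Lemma descents_upclosed (A : pred nat) P : upclosed A P -> descents false (map A P) = 0.
Proof.
elim: P => [//|x P IH] up /=; case Ax: (A x) => /=.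
  rewrite descents_const //; apply/allP => b /mapP[y yP ->] /=.
  by case/splitPr: yP up => l2 l3 up; rewrite (up [::] x l2 y l3).
by apply: IH => l1 y l2 z l3 eP; apply: (up (x :: l1)); rewrite eP.
Qed.

(* A block [g] of a word [P ++ g ++ Q], collapsed to the marker [true; false]. *)
Definition marked (A : pred nat) (P Q : seq nat) : Prop :=
  runs (map A P ++ [:: true; false] ++ map A Q) = 1.

Lemma markedP (A : pred nat) P Q : marked A P Q <-> upclosed A P /\ ~~ has A Q.
Proof.
split=> [r1|[up nQ]]; last first.
  rewrite /marked /runs -!catA descents_cat descents_upclosed //= descents_const ?andbF //.
  rewrite all_cat andbT all_map; apply/allP => x xQ /=; rewrite eqbF_neg.
  by apply: contraNN nQ => Ax; apply/hasP; exists x.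
have cv := runs1_convex r1; split.
- move=> l1 x l2 y l3 eP Ax.
  have := cv (map A (l1 ++ x :: l2)) [:: A y] (map A l3 ++ [:: true; false] ++ map A Q).
  rewrite /= andbT; apply.
  + have -> : P = (l1 ++ x :: l2) ++ [:: y] ++ l3 by rewrite eP -catA.
    by rewrite !map_cat -!catA.
  + by rewrite has_map; apply/hasP; exists x; rewrite // mem_cat inE eqxx orbT.
  + by rewrite has_cat /= orbT.
- apply/negP => hQ; have := cv (map A P ++ [:: true]) [:: false] (map A Q).
  by rewrite -catA has_cat /= orbT has_map => /(_ erefl isT hQ).
Qed.

Section Idempotents.
Variables (T : Type) (mul : T -> T -> T) (E F : T).
Hypotheses (mulA : associative mul) (EE : mul E E = E) (FF : mul F F = F).

Definition efe (j : nat) : T := iter j (fun y => mul y (mul F E)) E.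

Definition bool_elt (b : bool) : T := if b then F else E.

Lemma efeE j : mul (efe j) E = efe j.
Proof. by case: j => [|j] /=; rewrite -?mulA ?EE. Qed.

Lemma eval_runs l : eval_seq mul bool_elt E ([:: false] ++ l ++ [:: false]) = efe (runs l).
Proof.
pose state r (b : bool) := if b then mul (efe r) F else efe r.
suff fold_state r b m : foldl (fun a y => mul a (bool_elt y)) (state r b) m =
    state (r + descents b m) (last b m).
  by rewrite /= -[E]/(state 0 false) fold_state last_cat.
elim: m r b => [|x m IH] r b /=; first by rewrite addn0.
have -> : mul (state r b) (bool_elt x) = state (r + (b && ~~ x)) x.
  by case: b; case: x; rewrite /= ?addn0 ?addn1 ?efeE // -mulA ?FF.
by rewrite IH addnA.
Qed.

Variable k : nat.
Hypotheses (k_gt1 : 1 < k) (FE_periodic : powS mul (mul F E) k.+1 = powS mul (mul F E) 1)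
  (efe1_neq_k : efe 1 <> efe k.+1).

Lemma efe_shift i j m : efe i = efe j -> efe (m + i) = efe (m + j).
Proof. by move=> eij; rewrite /efe !iterD -!/(efe _) eij. Qed.

Lemma efeS_powS j : efe j.+1 = mul E (powS mul (mul F E) j).
Proof. by elim: j => [//|j IH]; rewrite /efe iterS -/(efe j.+1) IH /powS /= -mulA. Qed.

Lemma efe_periodic j : 1 < j -> efe (j + k) = efe j.
Proof.
move=> j_gt1; have -> : j = j.-1.+1 by lia.
by rewrite addSn !efeS_powS powS_periodic //; lia.
Qed.

(* [efe 1 = efe j] makes [efe] constant on [1 + m * (j - 1)], periodicity makes it
   constant on [k.+1 + m * k], and [1 + k * (j - 1) = k.+1 + (j - 2) * k]. *)
Lemma efe1_neq j : 1 < j -> efe 1 <> efe j.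
Proof.
move=> j_gt1 e1j; apply: efe1_neq_k.
have step1 m : efe (1 + m * j.-1) = efe 1.
  elim: m => [|m IH]; first by rewrite mul0n.
  rewrite -IH (_ : 1 + m.+1 * j.-1 = m * j.-1 + j); last by rewrite mulSn; lia.
  by rewrite -(efe_shift _ e1j) addnC.
have stepk m : efe (k.+1 + m * k) = efe k.+1.
  elim: m => [|m IH]; first by rewrite mul0n addn0.
  by rewrite -IH -[RHS]efe_periodic; [congr efe; rewrite mulSn|]; lia.
by rewrite -(step1 k) -(stepk (j - 2)); congr efe; nia.
Qed.

Lemma efe_min2 i j : efe i = efe j -> minn i 2 = minn j 2.
Proof.
wlog lt_ij : i j / i < j.
  move=> W eij; case: (ltngtP i j) => [/W/(_ eij) //|/W/(_ (esym eij)) //|->] //.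
move=> eij; case: i lt_ij eij => [|[|i]] lt_ij eij; last by lia.
- by case: (efe1_neq (j := j.+1)); [lia | rewrite -(efe_shift 1 eij)].
- by case: (efe1_neq lt_ij eij).
Qed.

Lemma sat_runs (psi : nat -> seq bool) L R u v :
  satisfies mul u v -> u != [::] -> v != [::] -> (forall t, psi t != [::]) ->
  minn (runs (L ++ flatten (map psi u) ++ R)) 2 =
  minn (runs (L ++ flatten (map psi v) ++ R)) 2.
Proof.
move=> uv nu nv npsi; apply: efe_min2; rewrite -!eval_runs.
have reassoc X : [:: false] ++ (L ++ X ++ R) ++ [:: false] =
    ([:: false] ++ L) ++ X ++ (R ++ [:: false]) by rewrite -!catA.
by rewrite !reassoc; apply: eval_subst_congr.
Qed.

Lemma sat_runs_map (A : pred nat) u v :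
  satisfies mul u v -> u != [::] -> v != [::] ->
  minn (runs (map A u)) 2 = minn (runs (map A v)) 2.
Proof.
have flatten1 w : flatten [seq [:: A t] | t <- w] = map A w by elim: w => //= t w ->.
move=> uv nu nv; have := sat_runs (psi := fun t => [:: A t]) [::] [::] uv nu nv.
by rewrite /= !cats0 !flatten1; apply.
Qed.
End Idempotents.

Lemma powS_idempotent (T : Type) (mul : T -> T -> T) (mulA : associative mul) a k :
  1 < k -> powS mul a k.+1 = powS mul a 1 ->
  mul (powS mul a k.-1) (powS mul a k.-1) = powS mul a k.-1.
Proof.
move=> k_gt1 per; rewrite (powS_mul mulA) -[RHS](powS_periodic per (j := k.-1)); last lia.
by congr powS; lia.
Qed.

Lemma eval_alternating (T : Type) (mul : T -> T -> T) (mulA : associative mul) phi d k j :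
  0 < k -> eval_word mul phi (pw k 0 ++ flatten (nseq j (pw k 1 ++ pw k 0))) d =
  efe mul (powS mul (phi 0) k.-1) (powS mul (phi 1) k.-1) j.
Proof.
move=> k_gt0; have pw_neq0 c : pw k c != [::] by rewrite /pw; case: k k_gt0.
have eval_pwk c : eval_seq mul phi d (pw k c) = powS mul (phi c) k.-1.
  by rewrite -eval_wordE -(eval_pw mul phi d) prednK.
rewrite eval_wordE; set X := pw k 1 ++ pw k 0.
elim: j => [|j IH]; first by rewrite cats0 eval_pwk.
have -> : flatten (nseq j.+1 X) = flatten (nseq j X) ++ X.
  by rewrite -addn1 nseqD flatten_cat /= cats0.
have nX : X != [::] by rewrite /X; case: (pw k 1) (pw_neq0 1).
have nL : pw k 0 ++ flatten (nseq j X) != [::] by case: (pw k 0) (pw_neq0 0).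
rewrite catA (eval_seq_cat mulA _ _ nL nX) IH.
by rewrite (eval_seq_cat mulA _ _ (pw_neq0 1) (pw_neq0 0)) !eval_pwk.
Qed.

Definition blocks (k : nat) (s : seq nat) : word := flatten [seq pw k i | i <- s].

Definition xyx (k : nat) (s : seq nat) : word := [:: 0] ++ blocks k s ++ [:: 0].

Definition blockwise (w : seq nat) : Prop := forall c, c != 0 -> convex (pred1 c) w.

Definition shaped (n : nat) (w : seq nat) : Prop :=
  [/\ forall c, (c \in w) = (c <= n), blockwise w & convex (predC1 0) w].

Lemma mem_blocks k s c : (c \in blocks k s) = (0 < k) && (c \in s).
Proof.
elim: s => [|i s IH]; rewrite /blocks /= ?andbF //.
by rewrite mem_cat -/(blocks k s) IH /pw mem_nseq inE; case: (0 < k).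
Qed.

Lemma mem_xyx k n c : 0 < k -> (c \in xyx k (iota 1 n)) = (c <= n).
Proof. by move=> k0; rewrite !mem_cat mem_blocks k0 mem_iota !inE; case: c => //= c; lia. Qed.

Lemma map_blocks_const (A : pred nat) b k s : (forall i, i \in s -> A i = b) ->
  all (pred1 b) (map A (blocks k s)).
Proof.
move=> hs; rewrite all_map; apply/allP => x; rewrite mem_blocks => /andP[_ /hs] /=.
by move->.
Qed.

Lemma runs_xyx_letter k n c : 0 < k -> 0 < c <= n -> runs (map (pred1 c) (xyx k (iota 1 n))) = 1.
Proof.
move=> k0 cn; have -> : iota 1 n = iota 1 c.-1 ++ c :: iota c.+1 (n - c).
  have -> : n = c.-1 + (n - c).+1 by lia.
  by rewrite iotaD /=; congr (_ ++ _ :: iota _ _); lia.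
rewrite /xyx /blocks map_cat flatten_cat /= !map_cat /= -/(blocks k _) -/(blocks k _).
rewrite -[_ :: _ ++ _]/([:: 0 == c] ++ _) -!catA catA.
have c0 : (0 == c) = false by apply/eqP; lia.
apply: runs_block; rewrite ?all_cat /pw ?map_nseq /= ?all_nseq /= ?c0 ?eqxx ?orbT ?andbT //.
- by apply: map_blocks_const => i; rewrite mem_iota => hi; apply/eqP; lia.
- by case: k k0.
- by apply: map_blocks_const => i; rewrite mem_iota => hi; apply/eqP; lia.
Qed.

Lemma runs_xyx_nonzero k n : 0 < k -> 0 < n -> runs (map (predC1 0) (xyx k (iota 1 n))) = 1.
Proof.
move=> k0 n0; rewrite /xyx !map_cat; apply: runs_block => //.
- by apply: map_blocks_const => i; rewrite mem_iota /= -lt0n => hi; lia.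
- by case: n n0 => // n _; case: k k0.
Qed.

Definition first_nz (w : seq nat) : nat := head 0 [seq c <- w | c != 0].

Lemma first_nz_cat P R : has (predC1 0) P -> first_nz (P ++ R) = first_nz P.
Proof. by rewrite has_filter /first_nz filter_cat; case: [seq c <- P | c != 0]. Qed.

Lemma first_nz_mem P : has (predC1 0) P -> (first_nz P \in P) && (first_nz P != 0).
Proof.
rewrite has_filter /first_nz; case e: [seq c <- P | c != 0] => [//|z s] _ /=.
have : z \in [seq c <- P | c != 0] by rewrite e inE eqxx.
by rewrite mem_filter andbC.
Qed.

Lemma first_nz_before w l1 x m : w = l1 ++ x :: m -> x != 0 -> x != first_nz w ->
  first_nz w \in l1.
Proof.
move=> -> x0; rewrite /first_nz filter_cat /= x0.
case e: [seq c <- l1 | c != 0] => [|z s] /=; first by rewrite eqxx.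
have : z \in [seq c <- l1 | c != 0] by rewrite e inE eqxx.
by rewrite mem_filter => /andP[].
Qed.

Lemma first_nz_xyx k s : 0 < k -> 0 \notin s -> first_nz (xyx k s) = head 0 s.
Proof.
case: s => [|c s] k0 //; rewrite inE eq_sym negb_or => /andP[c0 _].
by case: k k0 => // k _; rewrite /first_nz /= c0.
Qed.

Lemma first_nz_cat_zeros P R : all (pred1 0) P -> first_nz (P ++ R) = first_nz R.
Proof.
move=> zP; rewrite /first_nz filter_cat (_ : [seq c <- P | c != 0] = [::]) //.
by apply/eqP; rewrite -[_ == _]negbK -has_filter; apply/hasPn => x /(allP zP) /= ->.
Qed.

Section Marker.
Variables (P g Q g0 g1 : seq nat) (ga : nat).
Hypotheses (bwW : blockwise (P ++ g ++ Q)) (cvW : convex (predC1 0) (P ++ g ++ Q))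
  (def_g : g = g0 ++ ga :: g1) (g0_zero : all (pred1 0) g0) (ga_neq0 : ga != 0).

Lemma ga_in_g : ga \in g.
Proof. by rewrite def_g mem_cat inE eqxx orbT. Qed.

Lemma shared_letter l : l \in P -> l \in g -> l != 0 -> l = ga.
Proof.
move=> lP lg l0; apply/eqP; apply: contraT => lga.
have lg1 : l \in g1.
  move: lg; rewrite def_g mem_cat inE (negPf lga) /= => /orP[/(allP g0_zero) /= l_eq0|//].
  by rewrite l_eq0 in l0.
have := bwW l0 (w1 := P) (w2 := g0 ++ [:: ga]) (w3 := g1 ++ Q).
rewrite def_g -!catA has_pred1 lP has_pred1 mem_cat lg1 all_cat /= eq_sym (negPf lga).
by rewrite andbF => /(_ erefl isT isT).
Qed.

Lemma first_nz_outside l : l \in P -> l != 0 -> l \notin g -> first_nz P \notin g.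
Proof.
move=> lP l0 lg; have hasP0 : has (predC1 0) P by apply/hasP; exists l.
have /andP[cP c0] := first_nz_mem hasP0; apply/negP => cg.
have cga := shared_letter cP cg c0; rewrite cga in c0.
have lga : l != ga by apply: contraNneq lg => ->; apply: ga_in_g.
have [L1 [L2 def_P]] : exists L1 L2, P = L1 ++ l :: L2.
  by case/splitPr: lP => L1 L2; exists L1, L2.
have gaL1 : ga \in L1 by rewrite -cga; apply: (first_nz_before def_P l0); rewrite cga.
have := bwW c0 (w1 := L1) (w2 := l :: L2 ++ g0) (w3 := ga :: g1 ++ Q).
rewrite def_P def_g !has_pred1 gaL1 inE eqxx -!catA /= -!catA => /(_ erefl isT isT).
by rewrite (negPf lga).
Qed.

Lemma first_nz_inside : ~~ has (fun l => (l != 0) && (l \notin g)) P -> first_nz (P ++ g ++ Q) = ga.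
Proof.
move=> noP; case: (boolP (has (predC1 0) P)) => [hasP0|noP0].
  rewrite first_nz_cat //; have /andP[cP c0] := first_nz_mem hasP0.
  apply: shared_letter => //; apply: contraNT noP => cg.
  by apply/hasP; exists (first_nz P); rewrite ?c0.
rewrite first_nz_cat_zeros; last first.
  by apply/allP => x xP; apply: contraNT noP0 => x0; apply/hasP; exists x.
by rewrite def_g -catA first_nz_cat_zeros // /first_nz /= ga_neq0.
Qed.

Definition marker (e : nat) : pred nat :=
  fun l => ((l != 0) && (l \in P) && (l \notin g) && (l != e)) || (l == ga).

Lemma marker0 e : marker e 0 = false.
Proof. by rewrite /marker eqxx /= eq_sym (negPf ga_neq0). Qed.

Hypothesis ga_notin_Q : ga \notin Q.

Lemma marked_marker e : (e != 0 -> e = first_nz (P ++ g ++ Q)) -> marked (marker e) P Q.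
Proof.
move=> def_e; apply/markedP; split.
- move=> l1 x l2 y l3 def_P Ax; apply: contraT => Ay.
  have x0 : x != 0 by apply: contraTneq Ax => ->; rewrite marker0.
  have yP : y \in P by rewrite def_P mem_cat inE mem_cat inE eqxx !orbT.
  have [y0|y0] := eqVneq y 0.
    have := cvW (w1 := l1 ++ [:: x]) (w2 := l2 ++ y :: l3 ++ g0) (w3 := ga :: g1 ++ Q).
    rewrite def_P def_g -!catA /= -!catA has_cat /= x0 ga_neq0 orbT all_cat /= y0.
    by rewrite andbF => /(_ erefl isT isT).
  have yg : y \notin g.
    by apply: contra Ay => yg; rewrite /marker (shared_letter yP yg y0) eqxx orbT.
  have ye : y = e by apply/eqP; move: Ay; rewrite /marker y0 yP yg /= negb_or negbK => /andP[].
  have xe : x != e by apply: contraNneq Ay => xe; rewrite (_ : y = x) // ye xe.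
  have e0 : e != 0 by rewrite -ye.
  have e_first := def_e e0.
  have eL1 : e \in l1.
    rewrite e_first; apply: (first_nz_before (x := x) (m := l2 ++ y :: l3 ++ g ++ Q)) => //.
      by rewrite def_P -!catA /= -!catA.
    by rewrite -e_first.
  have := bwW e0 (w1 := l1) (w2 := x :: l2) (w3 := y :: l3 ++ g ++ Q).
  rewrite def_P -!catA /= -!catA !has_pred1 eL1 ye eqxx => /(_ erefl isT isT) /=.
  by rewrite (negPf xe).
- apply/hasP => -[x xQ]; rewrite /marker => /orP[/andP[/andP[/andP[x0 xP] xg] _]|/eqP xga].
    have := bwW x0 (w1 := P) (w2 := g) (w3 := Q); rewrite !has_pred1 xP xQ.
    move=> /(_ erefl isT isT) /allP /(_ ga ga_in_g) /= /eqP gax.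
    by rewrite -gax ga_in_g in xg.
  by move: ga_notin_Q; rewrite -xga xQ.
Qed.
End Marker.

Section SameFirstLetter.
Variables (n : nat) (P g Q P' Q' g0 g1 : seq nat) (ga : nat).
Hypotheses (shW : shaped n (P ++ g ++ Q)) (shW' : shaped n (P' ++ g ++ Q'))
  (def_g : g = g0 ++ ga :: g1) (g0_zero : all (pred1 0) g0) (ga_neq0 : ga != 0)
  (ga_notin_Q : ga \notin Q) (ga_notin_Q' : ga \notin Q')
  (same_marked : forall A : pred nat, A 0 = false -> marked A P Q <-> marked A P' Q').

(* The marker for [e = 0] is a contiguous block ending at [g] in [P' ++ g ++ Q'],
   hence also in [P ++ g ++ Q], so none of its letters occurs in [Q]. *)
Lemma mem_outside l : l != 0 -> l \notin g -> (l \in P) = (l \in P').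
Proof.
move: l.
have sub (R S R' S' : seq nat) : shaped n (R ++ g ++ S) -> shaped n (R' ++ g ++ S') ->
    ga \notin S' -> (marked (marker R' g ga 0) R' S' -> marked (marker R' g ga 0) R S) ->
    forall l, l != 0 -> l \notin g -> l \in R' -> l \in R.
  move=> [memW _ _] [memW' bwW' cvW'] gaS' hm l l0 lg lR'.
  have /hm/markedP[_ /hasPn/(_ l)] : marked (marker R' g ga 0) R' S'.
    by apply: (marked_marker bwW' cvW' def_g) => //; rewrite eqxx.
  have : l \in R ++ g ++ S by rewrite memW -memW' mem_cat lR'.
  by rewrite !mem_cat (negPf lg) /= /marker l0 lR' lg /= => /orP[//|lS /(_ lS)].
move=> l l0 lg; apply/idP/idP.
  by apply: (sub _ _ _ _ shW' shW ga_notin_Q) => // hm; apply/same_marked => //; apply: marker0.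
by apply: (sub _ _ _ _ shW shW' ga_notin_Q') => // hm; apply/same_marked => //; apply: marker0.
Qed.

Lemma same_first_nz : first_nz (P ++ g ++ Q) = first_nz (P' ++ g ++ Q').
Proof.
case: shW => [_ bwW cvW]; case: shW' => [_ bwW' cvW'].
case: (boolP (has (fun l => (l != 0) && (l \notin g)) P')) => [|noP']; last first.
  rewrite (first_nz_inside bwW' def_g) // (first_nz_inside bwW def_g) //.
  apply: contra noP' => /hasP[l lP /andP[l0 lg]].
  by apply/hasP; exists l; rewrite -?mem_outside ?l0.
case/hasP=> l' l'P' /andP[l'0 l'g].
have hasP'0 : has (predC1 0) P' by apply/hasP; exists l'.
have /andP[c'P' c'0] := first_nz_mem hasP'0.
have c'g := first_nz_outside bwW' def_g g0_zero l'P' l'0 l'g.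
have c'P : first_nz P' \in P by rewrite mem_outside.
have hasP0 : has (predC1 0) P by apply/hasP; exists (first_nz P').
have /andP[cP c0] := first_nz_mem hasP0.
have cg := first_nz_outside bwW def_g g0_zero c'P c'0 c'g.
rewrite !first_nz_cat //; apply: contraTeq isT => cc'.
set A := marker P' g ga (first_nz P').
have [upA _] : upclosed A P /\ ~~ has A Q.
  apply/markedP/same_marked; first exact: marker0.
  by apply: (marked_marker bwW' cvW' def_g) => // _; rewrite first_nz_cat.
have [L1 [M def_P]] : exists L1 M, P = L1 ++ first_nz P' :: M.
  by case/splitPr: c'P => L1 M; exists L1, M.
have cL1 : first_nz P \in L1 by apply: (first_nz_before def_P); rewrite // eq_sym.
have [La [Lb def_L1]] : exists La Lb, L1 = La ++ first_nz P :: Lb.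
  by case/splitPr: cL1 => La Lb; exists La, Lb.
have /upA : P = La ++ first_nz P :: Lb ++ first_nz P' :: M by rewrite {1}def_P def_L1 -catA.
rewrite /A /marker -mem_outside // cP c0 cg cc' eqxx !andbF /=.
by move=> /(_ isT) /eqP c'ga; rewrite c'ga (ga_in_g def_g) in c'g.
Qed.
End SameFirstLetter.

Lemma map_subst_word (A : pred nat) th w :
  map A (subst_word th w) = flatten (map (fun t => map A (th t)) w).
Proof. by rewrite /subst_word map_flatten -map_comp. Qed.

Lemma split_first_occ (r : nat) s : r \in s -> exists s1 s2, s = s1 ++ r :: s2 /\ r \notin s1.
Proof.
move=> rs; exists (take (index r s) s), (drop (index r s).+1 s); split.
  by rewrite -{1}(cat_take_drop (index r s) s) (drop_nth 0) ?index_mem ?nth_index.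
by apply/negP => /(index_ltn (s := s)); rewrite ltnn.
Qed.

Lemma split_first_nonzero s : has (predC1 0) s ->
  exists g0 ga g1, [/\ s = g0 ++ ga :: g1, all (pred1 0) g0 & ga != 0].
Proof.
elim: s => [//|x s IH] /=; have [->|x0] := eqVneq x 0; last by exists [::], x, s.
by case/IH=> g0 [ga [g1 [-> g0z ga0]]]; exists (0 :: g0), ga, g1.
Qed.

Lemma mem_after_first s g0 ga g1 x : s = g0 ++ ga :: g1 -> all (pred1 0) g0 ->
  x \in s -> x != 0 -> x != ga -> x \in g1.
Proof.
move=> -> g0z; rewrite mem_cat inE => /or3P[/(allP g0z)/eqP->|/eqP->|//].
  by rewrite eqxx.
by rewrite eqxx.
Qed.

Lemma blockwise_gap P g0 ga g1 Q d : blockwise (P ++ (g0 ++ ga :: g1) ++ Q) -> ga != 0 ->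
  d \in g1 -> d != ga -> ga \notin Q.
Proof.
move=> bw ga0 dg1 dga; apply/negP => gaQ.
have := bw ga ga0 (P ++ g0 ++ [:: ga]) g1 Q; rewrite -!catA !has_pred1 !mem_cat inE eqxx !orbT.
by move=> /(_ erefl isT gaQ) /allP /(_ d dg1) /eqP dga'; rewrite dga' eqxx in dga.
Qed.

Lemma pigeonhole_subst (u : seq nat) (th : nat -> seq nat) n :
  (forall c, 0 < c <= n -> c \in flatten (map th u)) -> size (undup u) < n ->
  exists2 r, r \in u & exists c d, [/\ c != d, c != 0, d != 0, c \in th r & d \in th r].
Proof.
move=> cover small; apply: NNPP => no_r.
pose f c := nth 0 u (find (fun t => c \in th t) u).
have f_spec c : 0 < c <= n -> (f c \in u) && (c \in th (f c)).
  move/cover/flattenP=> [_ /mapP[t tu ->] ct].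
  have ht : has (fun t => c \in th t) u by apply/hasP; exists t.
  by rewrite mem_nth ?(nth_find 0 ht) -?has_find.
have f_inj : {in iota 1 n &, injective f}.
  move=> c d; rewrite !mem_iota => cn dn fcd; have [//|cd] := eqVneq c d; case: no_r.
  have /andP[fu cf] := f_spec c (ltac:(lia)); have /andP[_ df] := f_spec d (ltac:(lia)).
  exists (f c) => //; exists c, d; split=> //; last by rewrite fcd.
    by rewrite -lt0n; lia.
  by rewrite -lt0n; lia.
have sub : {subset map f (iota 1 n) <= undup u}.
  move=> y /mapP[c]; rewrite mem_iota mem_undup => cn ->.
  by case/andP: (f_spec c (ltac:(lia))).
have := uniq_leq_size (etrans (map_inj_in_uniq f_inj) (iota_uniq 1 n)) sub.
by rewrite size_map size_iota; lia.
Qed.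

Section FirstLetterInvariant.
Variables (T : Type) (mul : T -> T -> T) (E F : T) (k n : nat).
Hypotheses (mulA : associative mul) (EE : mul E E = E) (FF : mul F F = F) (k_gt1 : 1 < k)
  (FE_periodic : powS mul (mul F E) k.+1 = powS mul (mul F E) 1)
  (efe1_neq_k : efe mul E F 1 <> efe mul E F k.+1) (n_gt0 : 0 < n).

Local Notation sat := (satisfies mul).
Local Notation runs_sat := (sat_runs mulA EE FF k_gt1 FE_periodic efe1_neq_k).
Local Notation runs_sat_map := (sat_runs_map mulA EE FF k_gt1 FE_periodic efe1_neq_k).

Lemma sat_xyx_shaped w : sat w (xyx k (iota 1 n)) -> w != [::] -> shaped n w.
Proof.
move=> sw nw; have k_gt0 : 0 < k by lia.
have nx : xyx k (iota 1 n) != [::] by [].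
have same A := minn_runs1 (runs_sat_map A sw nw nx).
have mem_w c : (c \in w) = (c <= n).
  have := minn_runs_has (runs_sat_map (pred1 c) sw nw nx).
  by rewrite !has_id_map !has_pred1 mem_xyx.
split=> // [c c0|]; last exact/convex_map/runs1_convex/(same _).2/runs_xyx_nonzero.
have [cn|cn] := boolP (c <= n); last by apply: convex_hasN; rewrite has_pred1 mem_w.
by apply/convex_map/runs1_convex/(same _).2/runs_xyx_letter => //; rewrite lt0n c0.
Qed.

Lemma marked_subst_tail (A : pred nat) th p u v :
  sat u v -> u != [::] -> v != [::] -> (forall x, th x != [::]) ->
  marked A (p ++ subst_word th u) [::] <-> marked A (p ++ subst_word th v) [::].
Proof.
move=> uv nu nv nth; rewrite /marked !map_cat !map_subst_word -!catA.
by apply/minn_runs1/runs_sat => // t; apply: map_neq0.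
Qed.

(* The occurrence of [r] becomes the marker, all other letters are read through [A]. *)
Lemma marked_subst_once (A : pred nat) th p q r u1 u2 v1 v2 :
  sat (u1 ++ r :: u2) (v1 ++ r :: v2) -> r \notin u1 ++ u2 -> r \notin v1 ++ v2 ->
  (forall x, th x != [::]) ->
  marked A (p ++ subst_word th u1) (subst_word th u2 ++ q) <->
  marked A (p ++ subst_word th v1) (subst_word th v2 ++ q).
Proof.
move=> uv ru rv nth; pose psi t := if t == r then [:: true; false] else map A (th t).
have reshape w1 w2 : r \notin w1 ++ w2 ->
    map A (p ++ subst_word th w1) ++ [:: true; false] ++ map A (subst_word th w2 ++ q) =
    map A p ++ flatten (map psi (w1 ++ r :: w2)) ++ map A q.
  rewrite mem_cat negb_or => /andP[r1 r2].
  have off w : r \notin w -> map psi w = map (fun t => map A (th t)) w.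
    by move=> rw; apply/eq_in_map => t tw; rewrite /psi; case: eqP => // tr; rewrite -tr tw in rw.
  by rewrite [map psi _]map_cat flatten_cat /= {2}/psi eqxx !off // !map_cat !map_subst_word -!catA.
rewrite /marked !reshape //; apply/minn_runs1/runs_sat => //; [by case: (u1) | by case: (v1) |].
by move=> t; rewrite /psi; case: (t == r); rewrite ?map_neq0.
Qed.

Lemma step_first_nz_tail u v th p q :
  sat u v -> u != [::] -> v != [::] -> (forall x, th x != [::]) ->
  shaped n (p ++ subst_word th u ++ q) -> shaped n (p ++ subst_word th v ++ q) ->
  has (predC1 0) q -> first_nz (p ++ subst_word th u ++ q) = first_nz (p ++ subst_word th v ++ q).
Proof.
move=> uv nu nv nth shu shv /split_first_nonzero[g0 [ga [g1 [def_q g0z ga0]]]].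
have reassoc X : p ++ X ++ q = (p ++ X) ++ q ++ [::] by rewrite cats0 catA.
move: shu shv; rewrite !reassoc => shu shv.
by apply: (same_first_nz shu shv def_q g0z ga0) => // A _; apply: marked_subst_tail.
Qed.

Lemma step_first_nz_inner u v th p q :
  sat u v -> u != [::] -> v != [::] -> (forall x, th x != [::]) -> size (undup u) < n ->
  shaped n (p ++ subst_word th u ++ q) -> shaped n (p ++ subst_word th v ++ q) ->
  ~~ has (predC1 0) p -> ~~ has (predC1 0) q ->
  first_nz (p ++ subst_word th u ++ q) = first_nz (p ++ subst_word th v ++ q).
Proof.
move=> uv nu nv nth small shu shv p0 q0.
have cover c : 0 < c <= n -> c \in flatten (map th u).
  case: shu => mem_u _ _ cn; have : c \in p ++ subst_word th u ++ q by rewrite mem_u; lia.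
  have c0 : c != 0 by rewrite -lt0n; lia.
  by rewrite !mem_cat => /or3P[cp|//|cq]; [case/hasP: p0 | case/hasP: q0]; exists c.
have [r ru [c [d [cd c0 d0 cr dr]]]] := pigeonhole_subst cover small.
have [g0 [ga [g1 [def_r g0z ga0]]]] : exists g0 ga g1,
    [/\ th r = g0 ++ ga :: g1, all (pred1 0) g0 & ga != 0].
  by apply: split_first_nonzero; apply/hasP; exists c.
have [d' d'g1 d'ga] : exists2 d', d' \in g1 & d' != ga.
  have [cga|cga] := eqVneq c ga; last by exists c; rewrite // (mem_after_first def_r).
  by exists d; rewrite -?cga 1?eq_sym // (mem_after_first def_r) // -cga eq_sym.
have rv : r \in v.
  have := minn_runs_has (runs_sat_map (pred1 r) uv nu nv).
  by rewrite !has_id_map !has_pred1 ru.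
have split_word w1 w2 : p ++ subst_word th (w1 ++ r :: w2) ++ q =
    (p ++ subst_word th w1) ++ th r ++ (subst_word th w2 ++ q).
  by rewrite /subst_word map_cat flatten_cat /= -!catA.
have ga_after w1 w2 : shaped n (p ++ subst_word th (w1 ++ r :: w2) ++ q) ->
    ga \notin subst_word th w2 ++ q.
  by case=> _ + _; rewrite split_word def_r => bw; apply: (blockwise_gap bw ga0 d'g1 d'ga).
have once w1 w2 : shaped n (p ++ subst_word th (w1 ++ r :: w2) ++ q) -> r \notin w1 ->
    r \notin w1 ++ w2.
  move=> /ga_after gaw2 r1; rewrite mem_cat (negPf r1); apply: contra gaw2 => rw2.
  rewrite mem_cat; apply/orP; left; apply/flattenP; exists (th r); first exact: map_f.
  by rewrite def_r mem_cat inE eqxx orbT.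
have [u1 [u2 [def_u ru1]]] := split_first_occ ru.
have [v1 [v2 [def_v rv1]]] := split_first_occ rv.
move: shu shv uv; rewrite def_u def_v => shu shv uv.
have ru' := once _ _ shu ru1; have rv' := once _ _ shv rv1.
have gau := ga_after _ _ shu; have gav := ga_after _ _ shv.
move: shu shv; rewrite !split_word => shu shv.
by apply: (same_first_nz shu shv def_r g0z ga0) => // A _; apply: marked_subst_once.
Qed.

Lemma step_first_nz u v th p q :
  sat u v -> u != [::] -> v != [::] -> (forall x, th x != [::]) -> size (undup u) < n ->
  sat (p ++ subst_word th u ++ q) (xyx k (iota 1 n)) ->
  sat (p ++ subst_word th v ++ q) (xyx k (iota 1 n)) ->
  first_nz (p ++ subst_word th u ++ q) = first_nz (p ++ subst_word th v ++ q).
Proof.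
move=> uv nu nv nth small su sv.
have nonempty w : w != [::] -> p ++ subst_word th w ++ q != [::].
  move=> nw; case: (p) => //; move: (flatten_map_neq0 nth nw).
  by rewrite /subst_word; case: flatten.
have shu := sat_xyx_shaped su (nonempty _ nu); have shv := sat_xyx_shaped sv (nonempty _ nv).
have [hp|p0] := boolP (has (predC1 0) p); first by rewrite !first_nz_cat.
have [hq|q0] := boolP (has (predC1 0) q); first exact: step_first_nz_tail.
exact: step_first_nz_inner.
Qed.

Lemma derivable_first_nz (Sig : seq identity) :
  (forall e, e \in Sig -> [/\ e.1 != [::], e.2 != [::] & sat e.1 e.2]) ->
  (forall e, e \in Sig -> size (undup e.1) < n) ->
  forall a b, derivable Sig a b -> sat a (xyx k (iota 1 n)) -> first_nz a = first_nz b.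
Proof.
move=> hSig small; have sound := derivable_sound mulA hSig.
move=> a b; elim=> {a b} [//|a b ab IH|a b c ab IHab bc IHbc|u v th p q uv nth] s.
- by rewrite IH // => phi d; rewrite (sound _ _ ab).
- by rewrite IHab // IHbc // => phi d; rewrite -(sound _ _ ab).
- have [nu nv su] := hSig _ uv.
  apply: step_first_nz => //; first exact: (small _ uv).
  by move=> phi d; rewrite -(sound _ _ (der_step p q uv nth)).
Qed.
End FirstLetterInvariant.

Theorem theorem5p2 (k : nat) (T : Type) (mul : T -> T -> T)
  (mulA : associative mul) :
  1 < k ->
  (forall n, 1 < n ->
     satisfies mul
       ([:: 0] ++ flatten [seq pw k i | i <- iota 1 n] ++ [:: 0])
       ([:: 0] ++ flatten [seq pw k i | i <- rev (iota 1 n)] ++ [:: 0])) ->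
  ~ satisfies mul (pw k 0 ++ pw k 1 ++ pw k 0)
                  (pw k 0 ++ flatten (nseq k.+1 (pw k 1 ++ pw k 0))) ->
  satisfies mul (pw k.+2 0) [:: 0; 0] ->
  satisfies mul (pw k.+1 0 ++ [:: 1; 0]) [:: 0; 1; 0] ->
  satisfies mul ([:: 0; 1] ++ pw k.+1 0) [:: 0; 1; 0] ->
  non_finitely_based mul.
Proof.
move=> k_gt1 swap no_ii period _ _ [Sig [hSig complete]].
have per x : powS mul x k.+1 = powS mul x 1.
  by have := period (fun=> x) x; rewrite !(eval_pw mul).
apply: no_ii => phi d; apply: NNPP => neq.
pose E := powS mul (phi 0) k.-1; pose F := powS mul (phi 1) k.-1.
have efe_neq : efe mul E F 1 <> efe mul E F k.+1.
  move=> e; apply: neq; rewrite -[pw k 0 ++ _ ++ _]cats0 -catA.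
  by rewrite (eval_alternating mulA _ _ 1) ?eval_alternating //; lia.
pose n := (\max_(e <- Sig) size (undup e.1)).+2.
have small e : e \in Sig -> size (undup e.1) < n.
  move=> eSig; have := leq_bigmax_seq (F := fun e : identity => size (undup e.1)) e eSig isT.
  by move/leq_trans; apply; apply: leqnSn.
have nonempty s : xyx k s != [::] by [].
have := derivable_first_nz mulA (powS_idempotent mulA k_gt1 (per (phi 0)))
  (powS_idempotent mulA k_gt1 (per (phi 1))) k_gt1 (per _) efe_neq (isT : 0 < n) hSig small
  (complete _ _ (nonempty _) (nonempty _) (swap n isT)) (fun _ _ => erefl).
rewrite !first_nz_xyx ?mem_rev ?mem_iota //; try lia.
by rewrite -!nth0 nth_rev ?size_iota ?nth_iota // /n; lia.
Qed.
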